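(* Let $\alpha\in[0,1)$, $c_{\mathrm{TX}}>0$, $\phi>0$, $\theta=\phi/c_{\mathrm{TX}}$, integers $N_S\geq B\geq 1$, $\lambda_{\mathrm{th}}=(1+\sqrt{\theta})^{-2}$, $v_{\mathrm{th}}(\lambda,0)=\sqrt{\lambda\theta}+\frac{\lambda}{2}+\sqrt{\lambda}\sqrt{\sqrt{\lambda\theta}+\frac{\lambda}{4}}$, and for $j\geq0$ let $\eta_j(\lambda)=1-\alpha^{j}(1-\sqrt{\lambda\theta})-v_{\mathrm{th}}(\lambda,0)$ and let $\lambda_j^*$ be the unique solution in $[0,\lambda_{\mathrm{th}}]$ of $\eta_j(\lambda)=0$. For $\lambda\in(0,\lambda_{\mathrm{th}})$ and $p_0\in[0,1]$, consider the process $V_0=1$ and for $k\geq0$: if $V_k>v_{\mathrm{th}}(\lambda,0)$ set $t_k=1$, $S_{M,k}=\frac{1}{\sqrt{\lambda\theta}}-\frac{1}{V_k}$; if $V_k<v_{\mathrm{th}}(\lambda,0)$ set $t_k=S_{M,k}=0$; if $V_k=v_{\mathrm{th}}(\lambda,0)$ set $t_k=1$, $S_{M,k}=\frac{1}{\sqrt{\lambda\theta}}-\frac{1}{V_k}$ with probability $p_0$ (independently over time) and $t_k=S_{M,k}=0$ otherwise; then $\hat V_k=\frac{V_k}{1+V_kt_kS_{M,k}}$ and $V_{k+1}=1-\alpha(1-\hat V_k)$. Let $\bar M_{MP}^{\lambda,p_0}=\lim_{T\to\infty}\mathbb E\left[\frac{1}{T+1}\sum_{k=0}^T\hat V_k\right]$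 and $\bar C_{MP}^{\lambda,p_0}=\lim_{T\to\infty}\mathbb E\left[\frac{1}{T+1}\sum_{k=0}^T\frac{1}{N_S}t_k(c_{\mathrm{TX}}+\phi S_{M,k})\right]$. Let $J\geq1$ be an integer, $\lambda\in(\lambda_{J-1}^*,\lambda_J^*]$ and $\hat V^*=\sqrt{\lambda\theta}$. (i) If $\lambda=\lambda_J^*$, then $$\bar M_{MP}^{\lambda,p_0}=1-\frac{\{1-\alpha^{J}[1-(1-\alpha)(1-p_0)]\}(1-\hat V^* )}{(J+1-p_0)(1-\alpha)},$$ $$\bar C_{MP}^{\lambda,p_0}=\frac{1}{N_S(J+1-p_0)}\left[c_{\mathrm{TX}}+\phi\frac{1-\hat V^*}{\hat V^*}\left(p_0\frac{1-\alpha^{J}}{1-\alpha^{J}(1-\hat V^* )}+(1-p_0)\frac{1-\alpha^{J+1}}{1-\alpha^{J+1}(1-\hat V^* )}\right)\right].$$ (ii) Otherwise ($\lambda\in(\lambda_{J-1}^*,\lambda_J^* )$), writing $\bar M_{MP}^{\lambda,1},\bar C_{MP}^{\lambda,1}$ for the (then $p_0$-independent) quantities, $$\bar M_{MP}^{\lambda,1}=1-\frac{(1-\alpha^{J})(1-\hat V^* )}{J(1-\alpha)},\qquad \bar C_{MP}^{\lambda,1}=\frac{1}{N_S J}\left[c_{\mathrm{TX}}+\phi\frac{1}{\hat V^*}\frac{(1-\alpha^{J})(1-\hat V^* )}{1-\alpha^{J}(1-\hat V^* )}\right].$$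
   Context: This is the myopic policy of the coordinated scheme with infinite ambient SNR: the fusion center tracks $X_{k+1}=\sqrt\alpha X_k+Z_k$ with unit stationary variance; $V_k$ is the prior variance, $\hat V_k$ the posterior variance (MSE) at slot $k$; at most one sensor (out of $N_S$) is activated, with local measurement SNR $S_{M,k}$ and cost $c_{\mathrm{TX}}+\phi S_{M,k}$; the per-sensor cost averages the network cost over the $N_S$ sensors. *)

From mathcomp Require Import all_boot all_order all_algebra.
From mathcomp Require Import all_classical all_reals all_analysis.
Set Implicit Arguments. Unset Strict Implicit. Unset Printing Implicit Defensive.
Import Order.TTheory GRing.Theory Num.Theory.
Local Open Scope ring_scope.

Section MP.
Variable R : realType.

Definition vth (th l : R) : R :=
  Num.sqrt (l * th) + l / 2 + Num.sqrt l * Num.sqrt (Num.sqrt (l * th) + l / 4).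

Definition lam_th (th : R) : R := (1 + Num.sqrt th) ^- 2.

Definition eta (al th : R) (j : nat) (l : R) : R :=
  1 - al ^+ j * (1 - Num.sqrt (l * th)) - vth th l.

(* decision at slot k given prior variance V and the tie-breaking coin b
   (b = true with probability p0) *)
Definition active (th l V : R) (b : bool) : bool :=
  (vth th l < V) || ((V == vth th l) && b).

Definition tk (th l V : R) (b : bool) : R := if active th l V b then 1 else 0.

Definition SM (th l V : R) (b : bool) : R :=
  if active th l V b then (Num.sqrt (l * th))^-1 - V^-1 else 0.

Definition Vhat (th l V : R) (b : bool) : R :=
  V / (1 + V * tk th l V b * SM th l V b).

Fixpoint Vprior (al th l : R) (w : nat -> bool) (k : nat) : R :=
  match k with
  | 0 => 1
  | k'.+1 => 1 - al * (1 - Vhat th l (Vprior al th l w k') (w k'))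
  end.

(* Expectation over the i.i.d. Bernoulli(p0) coins used in slots 0..T
   (finite probability space {ffun 'I_T.+1 -> bool}). *)
Definition coins (T : nat) (f : {ffun 'I_T.+1 -> bool}) : nat -> bool :=
  fun k => if (k < T.+1)%N then f (inord k) else false.

Definition weight (p0 : R) (T : nat) (f : {ffun 'I_T.+1 -> bool}) : R :=
  \prod_(i < T.+1) (if f i then p0 else 1 - p0).

Definition expect (p0 : R) (T : nat) (X : (nat -> bool) -> R) : R :=
  \sum_(f : {ffun 'I_T.+1 -> bool}) weight p0 f * X (coins f).

Definition Mavg (al th l p0 : R) (T : nat) : R :=
  expect p0 T (fun w =>
    (T.+1%:R)^-1 * \sum_(k < T.+1) Vhat th l (Vprior al th l w k) (w k)).

Definition Cavg (al th cTX phi : R) (NS : nat) (l p0 : R) (T : nat) : R :=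
  expect p0 T (fun w =>
    (T.+1%:R)^-1 * \sum_(k < T.+1)
      (NS%:R)^-1 * tk th l (Vprior al th l w k) (w k)
        * (cTX + phi * SM th l (Vprior al th l w k) (w k))).

End MP.

(* After a transmission the posterior variance is always V^ = sqrt(lambda theta), so m slots
   later the prior variance is 1 - alpha^m (1 - V^), increasing in m.  The decision therefore
   depends only on the phase m, the number of slots since the last transmission: for lambda in
   (lambda*_{J-1}, lambda*_J] the policy is silent in phases 1 .. J-1, transmits at phase J
   (only when the tie coin says so if lambda = lambda*_J) and surely at phase J+1.  The phase
   is a finite Markov chain driven by the coins, and both averages are renewal-reward ratios:
   the expected reward of a cycle over its expected length J + (1 - p0) [lambda = lambda*_J].
   The Cesaro limit follows from an explicit solution of the Poisson equation of the chain,
   which makes the averaged sums telescope. *)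

From mathcomp Require Import all_boot all_order all_algebra.
From mathcomp Require Import all_classical all_reals all_analysis.
From mathcomp Require Import ring lra.

Set Implicit Arguments.
Unset Strict Implicit.
Unset Printing Implicit Defensive.
Import Order.TTheory GRing.Theory Num.Theory.
Import numFieldNormedType.Exports.
Local Open Scope classical_set_scope.
Local Open Scope ring_scope.

Definition coin_mean (R : realType) (p0 : R) (f : bool -> R) : R :=
  p0 * f true + (1 - p0) * f false.

Lemma sum_coin_mean_cst (R : realType) (p0 : R) (r : nat -> bool -> R) (f : nat -> R)
    m n :
  (forall i b, (m <= i < n)%N -> r i b = f i) ->
  \sum_(m <= i < n) coin_mean p0 (r i) = \sum_(m <= i < n) f i.
Proof. by move=> rf; apply: eq_big_nat => i /rf rfi; rewrite /coin_mean !rfi; ring. Qed.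

Section CoinExpectation.
Variables (R : realType) (p0 : R) (T : nat).
Implicit Types X Y : (nat -> bool) -> R.

Lemma eq_expect X Y : X =1 Y -> expect p0 T X = expect p0 T Y.
Proof. by move=> XY; apply: eq_bigr => f _; rewrite XY. Qed.

Lemma expectZl c X : expect p0 T (fun w => c * X w) = c * expect p0 T X.
Proof. by rewrite /expect mulr_sumr; apply: eq_bigr => f _; rewrite mulrCA. Qed.

Lemma expectD X Y :
  expect p0 T (fun w => X w + Y w) = expect p0 T X + expect p0 T Y.
Proof. by rewrite /expect -big_split; apply: eq_bigr => f _; rewrite mulrDr. Qed.

Lemma expectB X Y :
  expect p0 T (fun w => X w - Y w) = expect p0 T X - expect p0 T Y.
Proof. by rewrite /expect -sumrB; apply: eq_bigr => f _; rewrite mulrBr. Qed.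

Lemma expect_sum n (X : nat -> (nat -> bool) -> R) :
  expect p0 T (fun w => \sum_(k < n) X k w) = \sum_(k < n) expect p0 T (X k).
Proof. by rewrite /expect; under eq_bigr do rewrite mulr_sumr; exact: exchange_big. Qed.

Lemma sum_weight : \sum_(f : {ffun 'I_T.+1 -> bool}) weight p0 f = 1.
Proof.
rewrite /weight -(bigA_distr_bigA (fun i (b : bool) => if b then p0 else 1 - p0)).
by rewrite big1 // => i _; rewrite big_bool /=; ring.
Qed.

Lemma expect_cst c : expect p0 T (fun=> c) = c.
Proof. by rewrite /expect -mulr_suml sum_weight mul1r. Qed.

Lemma expect_fresh_coin k (F : (nat -> bool) -> bool -> R) : (k < T.+1)%N ->
  (forall w w', (forall i, (i < k)%N -> w i = w' i) -> F w = F w') ->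
  expect p0 T (fun w => F w (w k)) = expect p0 T (fun w => coin_mean p0 (F w)).
Proof.
move=> kT F_past.
pose k0 : 'I_T.+1 := inord k.
have coinsk f : coins f k = f k0 by rewrite /coins kT.
(* Pairing each outcome with its flip at slot [k0] separates coin [k] from the others. *)
pose flip (f : {ffun 'I_T.+1 -> bool}) := [ffun i => if i == k0 then ~~ f i else f i].
have flipK : involutive flip.
  by move=> f; apply/ffunP => i; rewrite !ffunE; case: eqP => // ->; rewrite negbK.
have flip_k0 f : flip f k0 = ~~ f k0 by rewrite ffunE eqxx.
have sum_pairs (Phi : {ffun 'I_T.+1 -> bool} -> R) :
    \sum_f Phi f = \sum_(f : {ffun _ -> bool} | f k0) (Phi f + Phi (flip f)).
  rewrite (bigID (fun f : {ffun _ -> bool} => f k0)) /= big_split /=; congr (_ + _).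
  rewrite (reindex_inj (can_inj flipK)) /=.
  by apply: eq_bigl => f; rewrite flip_k0 negbK.
pose W f := \prod_(i | i != k0) (if f i then p0 else 1 - p0).
have weightE f : weight p0 f = (if f k0 then p0 else 1 - p0) * W f.
  by rewrite /weight (bigD1 k0).
have W_flip f : W (flip f) = W f.
  by apply: eq_bigr => i /negbTE ik0; rewrite ffunE ik0.
have F_flip f : F (coins (flip f)) = F (coins f).
  apply: F_past => i ik; have iT : (i < T.+1)%N by rewrite (ltn_trans ik).
  rewrite /coins iT ffunE ifN //; apply: contraTneq ik => /(congr1 val) /=.
  by rewrite !inordK // => ->; rewrite ltnn.
rewrite /expect !sum_pairs; apply: eq_bigr => f fk0.
rewrite !weightE !coinsk flip_k0 fk0 W_flip F_flip /coin_mean /=; ring.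
Qed.

Hypotheses (p0_ge0 : 0 <= p0) (p0_le1 : p0 <= 1).

Lemma weight_ge0 (f : {ffun 'I_T.+1 -> bool}) : 0 <= weight p0 f.
Proof. by apply: prodr_ge0 => i _; case: (f i); rewrite ?subr_ge0. Qed.

Lemma expect_norm_le X C : (forall w, `|X w| <= C) -> `|expect p0 T X| <= C.
Proof.
move=> X_le; rewrite -[C](expect_cst C) /expect.
apply: le_trans (ler_norm_sum _ _ _) (ler_sum _ _) => f _.
by rewrite normrM ger0_norm ?weight_ge0 // ler_wpM2l ?weight_ge0.
Qed.

End CoinExpectation.

Fixpoint chain (next : nat -> bool -> nat) (w : nat -> bool) (k : nat) : nat :=
  if k is k'.+1 then next (chain next w k') (w k') else 0%N.

Lemma eq_chain next k w w' :
  (forall i, (i < k)%N -> w i = w' i) -> chain next w k = chain next w' k.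
Proof.
elim: k => [//|k IHk] ww' /=.
by rewrite ww' // IHk // => i ik; rewrite ww' // ltnW.
Qed.

Definition cesaro_reward (R : realType) (p0 : R) (next : nat -> bool -> nat)
    (r : nat -> bool -> R) (T : nat) : R :=
  expect p0 T (fun w => (T.+1%:R)^-1 * \sum_(k < T.+1) r (chain next w k) (w k)).

Section PoissonEquation.
Variables (R : realType) (p0 : R) (N : nat) (next : nat -> bool -> nat).
Variables (r : nat -> bool -> R) (h : nat -> R) (g : R).
Hypothesis next_le : forall m b, (m <= N)%N -> (next m b <= N)%N.
Hypothesis poisson : forall m, (m <= N)%N ->
  coin_mean p0 (r m) - g = h m - coin_mean p0 (h \o next m).

Lemma chain_le w k : (chain next w k <= N)%N.
Proof. by elim: k => [|k IHk] //=; apply: next_le. Qed.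

Lemma expect_reward_step T k : (k < T.+1)%N ->
  expect p0 T (fun w => r (chain next w k) (w k)) =
  g + expect p0 T (fun w => h (chain next w k))
    - expect p0 T (fun w => h (chain next w k.+1)).
Proof.
move=> kT.
have coin_past (F : nat -> bool -> R) :
    expect p0 T (fun w => F (chain next w k) (w k)) =
    expect p0 T (fun w => coin_mean p0 (F (chain next w k))).
  by apply: (@expect_fresh_coin _ _ _ _ (fun w => F (chain next w k))) => // w w' /eq_chain ->.
rewrite coin_past (coin_past (fun m b => h (next m b))) -addrA -expectB.
rewrite -(expect_cst p0 T g) -expectD.
apply: eq_expect => w /=; have := poisson (chain_le w k); rewrite /comp => <-; ring.
Qed.

Lemma expect_reward_sum T :
  expect p0 T (fun w => \sum_(k < T.+1) r (chain next w k) (w k)) =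
  T.+1%:R * g + h 0 - expect p0 T (fun w => h (chain next w T.+1)).
Proof.
pose a k := expect p0 T (fun w => h (chain next w k)).
rewrite (@expect_sum _ p0 T T.+1 (fun k w => r (chain next w k) (w k))).
under eq_bigr => k _ do rewrite (expect_reward_step (ltn_ord k)) -addrA.
rewrite big_split /= sumr_const card_ord mulr_natl -addrA; congr (_ + _).
rewrite -(big_mkord xpredT (fun k => a k - a k.+1)).
under eq_bigr do rewrite -opprB.
by rewrite sumrN telescope_sumr // opprB /a /= expect_cst.
Qed.

Hypotheses (p0_ge0 : 0 <= p0) (p0_le1 : p0 <= 1).

Lemma cesaro_reward_cvg : cesaro_reward p0 next r @ \oo --> g.
Proof.
pose C := `|h 0| + \sum_(m < N.+1) `|h m| + 1.
have h_le m : (m <= N)%N -> `|h m| <= \sum_(m < N.+1) `|h m|.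
  move=> mN; rewrite (bigD1 (inord m)) //= inordK ?ltnS //.
  by rewrite lerDl sumr_ge0.
have C_gt0 : 0 < C by rewrite ltr_wpDl ?addr_ge0 ?sumr_ge0.
apply/cvgrPdist_le => e e_gt0.
have /cvgrPdist_le /(_ (e / C) (divr_gt0 e_gt0 C_gt0)) := @cvg_harmonic R.
apply: filterS => T; rewrite /harmonic /= sub0r normrN ger0_norm // => T_small.
rewrite /cesaro_reward expectZl expect_reward_sum.
set E := expect _ _ _.
have E_le : `|E| <= \sum_(m < N.+1) `|h m|.
  by apply: expect_norm_le => // w; exact/h_le/chain_le.
have -> : g - (T.+1%:R)^-1 * (T.+1%:R * g + h 0 - E) = - ((T.+1%:R)^-1 * (h 0 - E)).
  by field.
rewrite normrN normrM ger0_norm //.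
apply: le_trans (ler_wpM2l _ (_ : `|h 0 - E| <= C)) _ => //.
  by apply: le_trans (ler_normB _ _) _; rewrite /C; lra.
by rewrite -ler_pdivlMr.
Qed.

End PoissonEquation.

(* Phase [m] counts the slots since the last transmission, [0] meaning that nothing
   was sent yet; [strict] says that the threshold is crossed strictly at phase [J],
   so that the tie-breaking coin is never used. *)
Definition transmits (J : nat) (strict : bool) (m : nat) (b : bool) : bool :=
  (m == 0)%N || (J < m)%N || ((m == J) && (b || strict)).

Definition next_phase (J : nat) (strict : bool) (m : nat) (b : bool) : nat :=
  if transmits J strict m b then 1%N else m.+1.

Lemma transmits_idle J strict m b : (0 < m < J)%N -> transmits J strict m b = false.
Proof. by case/andP=> m_gt0 m_lt; rewrite /transmits gtn_eqF // ltnNge ltnW // ltn_eqF. Qed.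

Lemma transmits_J J strict b : (0 < J)%N -> transmits J strict J b = b || strict.
Proof. by move=> J_gt0; rewrite /transmits gtn_eqF // ltnn eqxx. Qed.

Lemma transmits_succJ J strict b : transmits J strict J.+1 b.
Proof. by rewrite /transmits ltnSn orbT. Qed.

Lemma next_phase_le J strict m b :
  (m <= J.+1)%N -> (next_phase J strict m b <= J.+1)%N.
Proof.
rewrite /next_phase /transmits; case: ifP => // /negbT.
by rewrite !negb_or -leqNgt => /andP[/andP[_ mJ] _].
Qed.

Section RenewalCycle.
Variables (R : realType) (p0 : R) (J : nat) (strict : bool) (r : nat -> bool -> R).

Definition cycle_reward : R :=
  \sum_(1 <= i < J.+1) coin_mean p0 (r i)
  + (if strict then 0 else (1 - p0) * coin_mean p0 (r J.+1)).

Definition cycle_length : R := J%:R + (if strict then 0 else 1 - p0).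

Hypotheses (J_gt0 : (0 < J)%N) (p0_ge0 : 0 <= p0) (p0_le1 : p0 <= 1).

Lemma cycle_length_gt0 : 0 < cycle_length.
Proof. by rewrite /cycle_length; case: strict; rewrite ?addr0 ?ltr_pwDl ?ltr0n ?subr_ge0. Qed.

Let g := cycle_reward / cycle_length.
Let excess m := coin_mean p0 (r m) - g.
Let tail := excess J + (if strict then 0 else (1 - p0) * excess J.+1).
Let bias m :=
  if m == 0%N then excess 0
  else if (m <= J)%N then \sum_(m <= i < J) excess i + tail
  else excess J.+1.

Lemma bias1 : bias 1 = 0.
Proof.
rewrite /bias /= J_gt0 /tail addrA -big_nat_recr //= /excess sumrB sumr_const_nat.
transitivity (cycle_reward - g * cycle_length).
  by rewrite /cycle_reward /cycle_length subSS subn0 -mulr_natl; case: strict; ring.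
by rewrite /g mulfVK ?subrr // gt_eqF // cycle_length_gt0.
Qed.

Lemma phase_poisson m : (m <= J.+1)%N ->
  coin_mean p0 (r m) - g = bias m - coin_mean p0 (bias \o next_phase J strict m).
Proof.
move=> mJ; rewrite -/(excess m) /coin_mean /comp /next_phase.
have [->|m_neq0] := eqVneq m 0%N; first by rewrite /= bias1 /bias /=; ring.
case: (ltngtP m J) => [m_lt|m_gt|->].
- rewrite !transmits_idle ?lt0n ?m_neq0 // /bias (negbTE m_neq0) (ltnW m_lt) m_lt /=.
  by rewrite big_ltn //; ring.
- have -> : m = J.+1 by apply/eqP; rewrite eqn_leq mJ m_gt.
  by rewrite !transmits_succJ bias1 /bias /= ltnn; ring.
- have bias_next : bias (if strict then 1%N else J.+1) = if strict then 0 else excess J.+1.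
    by case: strict; rewrite ?bias1 // /bias /= ltnn.
  rewrite !transmits_J //= bias1 bias_next /bias (gtn_eqF J_gt0) leqnn big_geq // add0r.
  by rewrite /tail; case: strict; ring.
Qed.

Theorem cesaro_cycle_cvg :
  cesaro_reward p0 (next_phase J strict) r @ \oo --> cycle_reward / cycle_length.
Proof.
apply: (@cesaro_reward_cvg _ _ J.+1 _ _ bias) => //.
  exact: next_phase_le.
exact: phase_poisson.
Qed.

End RenewalCycle.

Section ThresholdFunction.
Variables (R : realType) (th : R).
Hypothesis th_gt0 : 0 < th.

Lemma lt_vth_sub_sqrt c x y : 0 <= c -> c <= 1 -> 0 <= x -> x < y ->
  vth th x - c * Num.sqrt (x * th) < vth th y - c * Num.sqrt (y * th).
Proof.
move=> c_ge0 c_le1 x_ge0 xy; have y_ge0 := le_trans x_ge0 (ltW xy).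
have th_ge0 := ltW th_gt0.
have s1 : Num.sqrt (x * th) <= Num.sqrt (y * th).
  by rewrite ler_sqrt ?mulr_ge0 // ler_pM2r // ltW.
have s2 : Num.sqrt x * Num.sqrt (Num.sqrt (x * th) + x / 4) <=
          Num.sqrt y * Num.sqrt (Num.sqrt (y * th) + y / 4).
  apply: ler_pM; rewrite ?sqrtr_ge0 // ler_sqrt ?addr_ge0 ?sqrtr_ge0 ?divr_ge0 //.
    exact: ltW.
  by rewrite lerD // ler_pM2r // ltW.
have s3 : (1 - c) * Num.sqrt (x * th) <= (1 - c) * Num.sqrt (y * th).
  by rewrite ler_wpM2l ?subr_ge0.
rewrite /vth; lra.
Qed.

Lemma vth_lam_th : vth th (lam_th th) = 1.
Proof.
set s := Num.sqrt th.
have s_gt0 : 0 < s by rewrite sqrtr_gt0.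
have lamE : lam_th th = ((1 + s)^-1) ^+ 2 by rewrite /lam_th exprVn.
have thE : th = s ^+ 2 by rewrite sqr_sqrtr // ltW.
have sqrt_lam : Num.sqrt (lam_th th) = (1 + s)^-1.
  by rewrite lamE sqrtr_sqr ger0_norm // invr_ge0; lra.
have sqrt_lam_th : Num.sqrt (lam_th th * th) = s / (1 + s).
  rewrite lamE thE -exprMn sqrtr_sqr ger0_norm mulrC //.
  by rewrite divr_ge0 //; lra.
have sqrt_inner : Num.sqrt (s / (1 + s) + lam_th th / 4) = (2 * s + 1) / (2 * (1 + s)).
  have -> : s / (1 + s) + lam_th th / 4 = ((2 * s + 1) / (2 * (1 + s))) ^+ 2.
    by rewrite lamE; field; lra.
  by rewrite sqrtr_sqr ger0_norm // divr_ge0; lra.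
by rewrite /vth sqrt_lam_th sqrt_inner sqrt_lam lamE; field; lra.
Qed.

Lemma vth_lt1 l : 0 <= l -> l < lam_th th -> vth th l < 1.
Proof.
move=> l_ge0 l_lt; rewrite -vth_lam_th.
by have := lt_vth_sub_sqrt (lexx 0) ler01 l_ge0 l_lt; rewrite !mul0r !subr0.
Qed.

Lemma sqrt_le_vth l : 0 <= l -> Num.sqrt (l * th) <= vth th l.
Proof.
move=> l_ge0; rewrite /vth -addrA lerDl.
by rewrite addr_ge0 ?mulr_ge0 ?sqrtr_ge0 ?divr_ge0.
Qed.

Lemma sqrt_lt1 l : 0 <= l -> l < lam_th th -> Num.sqrt (l * th) < 1.
Proof. by move=> l_ge0 l_lt; rewrite (le_lt_trans (sqrt_le_vth l_ge0)) ?vth_lt1. Qed.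

Lemma eta_lt al j x y : 0 <= al -> al <= 1 -> 0 <= x -> x < y ->
  eta al th j y < eta al th j x.
Proof.
move=> al_ge0 al_le1 x_ge0 xy.
have := lt_vth_sub_sqrt (exprn_ge0 j al_ge0) (exprn_ile1 j al_ge0 al_le1) x_ge0 xy.
by rewrite /eta; lra.
Qed.

End ThresholdFunction.

Definition idle_var (R : realType) (al v : R) (m : nat) : R := 1 - al ^+ m * (1 - v).

Definition phase_var (R : realType) (al v : R) (m : nat) : R :=
  if m == 0%N then 1 else idle_var al v m.

Definition mse_reward (R : realType) (al v : R) J strict m b : R :=
  if transmits J strict m b then v else phase_var al v m.

Definition cost_reward (R : realType) (NS : nat) (cTX phi al v : R) J strict m b : R :=
  if transmits J strict m b then (NS%:R)^-1 * (cTX + phi * (v^-1 - (phase_var al v m)^-1))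
  else 0.

Lemma eta_idle_var (R : realType) (al th : R) j l :
  eta al th j l = idle_var al (Num.sqrt (l * th)) j - vth th l.
Proof. by rewrite /eta /idle_var. Qed.

Section IdleVariance.
Variables (R : realType) (al v : R).
Hypotheses (al_ge0 : 0 <= al) (al_lt1 : al < 1) (v_le1 : v <= 1).

Lemma le_idle_var m n : (m <= n)%N -> idle_var al v m <= idle_var al v n.
Proof.
move=> mn; rewrite lerD2l lerN2 ler_wpM2r ?subr_ge0 //.
exact: (ler_wiXn2l al_ge0 (ltW al_lt1) mn).
Qed.

Lemma idle_var_ge m : v <= idle_var al v m.
Proof. by have := le_idle_var (leq0n m); rewrite /idle_var expr0 mul1r subKr. Qed.

Lemma lt_idle_var_succ m : 0 < al -> v < 1 -> idle_var al v m < idle_var al v m.+1.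
Proof.
move=> al_gt0 v_lt1; rewrite -subr_gt0 /idle_var exprS.
have -> : 1 - al * al ^+ m * (1 - v) - (1 - al ^+ m * (1 - v)) =
          al ^+ m * (1 - al) * (1 - v) by ring.
by rewrite !mulr_gt0 ?exprn_gt0 ?subr_gt0.
Qed.

Lemma sum_idle_var n : (0 < n)%N ->
  \sum_(1 <= i < n) idle_var al v i = n%:R - 1 - (1 - v) * (al - al ^+ n) / (1 - al).
Proof.
move=> n_gt0; have al_neq1 : 1 - al != 0 by rewrite subr_eq0 eq_sym lt_eqF.
have geo : \sum_(1 <= i < n) al ^+ i = (al - al ^+ n) / (1 - al).
  rewrite -[LHS](mulfK al_neq1) mulr_suml; congr (_ / _).
  under eq_bigr do rewrite mulrBr mulr1 -exprSr -opprB.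
  by rewrite sumrN telescope_sumr // expr1 opprB.
rewrite /idle_var sumrB sumr_const_nat -mulr_suml geo -mulr_natl natrB //; ring.
Qed.

End IdleVariance.

Section CycleAverages.
Variables (R : realType) (al v p0 : R) (J : nat).
Hypotheses (al_ge0 : 0 <= al) (al_lt1 : al < 1) (v_gt0 : 0 < v) (v_le1 : v <= 1).
Hypothesis J_gt0 : (0 < J)%N.

Lemma mse_reward_idle strict i b :
  (0 < i < J)%N -> mse_reward al v J strict i b = idle_var al v i.
Proof.
move=> iJ; rewrite /mse_reward transmits_idle // /phase_var gtn_eqF //.
by case/andP: iJ.
Qed.

Lemma cost_reward_idle NS cTX phi strict i b : (0 < i < J)%N ->
  cost_reward NS cTX phi al v J strict i b = 0.
Proof. by move=> iJ; rewrite /cost_reward transmits_idle. Qed.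

Let al_neq1 : 1 - al != 0.
Proof. by rewrite subr_eq0 eq_sym lt_eqF. Qed.

Let J_neq0 : J%:R != 0 :> R.
Proof. by rewrite pnatr_eq0 -lt0n. Qed.

Let idle_var_neq0 m : idle_var al v m != 0.
Proof. by rewrite gt_eqF // (lt_le_trans v_gt0) // idle_var_ge. Qed.

Lemma mse_ratio_strict :
  cycle_reward p0 J true (mse_reward al v J true) / cycle_length p0 J true =
  1 - (1 - al ^+ J) * (1 - v) / (J%:R * (1 - al)).
Proof.
rewrite /cycle_reward /cycle_length big_nat_recr //= (sum_coin_mean_cst _ (mse_reward_idle _)).
rewrite sum_idle_var // /coin_mean /mse_reward !transmits_J //=.
by field; rewrite al_neq1 J_neq0.
Qed.

Lemma cost_ratio_strict NS cTX phi : (0 < NS)%N ->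
  cycle_reward p0 J true (cost_reward NS cTX phi al v J true) / cycle_length p0 J true =
  (NS%:R * J%:R)^-1 *
  (cTX + phi * v^-1 * ((1 - al ^+ J) * (1 - v) / (1 - al ^+ J * (1 - v)))).
Proof.
move=> NS_gt0; have NS_neq0 : NS%:R != 0 :> R by rewrite pnatr_eq0 -lt0n.
rewrite /cycle_reward /cycle_length big_nat_recr //=.
rewrite (sum_coin_mean_cst _ (cost_reward_idle _ _ _ _)) big1_eq /coin_mean /cost_reward.
rewrite !transmits_J //= /phase_var gtn_eqF //.
have := idle_var_neq0 J; rewrite /idle_var => idle_neq0.
by field; rewrite NS_neq0 J_neq0 idle_neq0 gt_eqF.
Qed.

Hypothesis p0_le1 : p0 <= 1.

Let tie_length_neq0 : J%:R + 1 - p0 != 0 :> R.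
Proof. by rewrite gt_eqF // -addrA ltr_pwDl ?ltr0n ?subr_ge0. Qed.

Lemma mse_ratio_tie :
  cycle_reward p0 J false (mse_reward al v J false) / cycle_length p0 J false =
  1 - (1 - al ^+ J * (1 - (1 - al) * (1 - p0))) * (1 - v) / ((J%:R + 1 - p0) * (1 - al)).
Proof.
rewrite /cycle_reward /cycle_length big_nat_recr //= (sum_coin_mean_cst _ (mse_reward_idle _)).
rewrite sum_idle_var // /coin_mean /mse_reward !transmits_J // !transmits_succJ /=.
rewrite /phase_var gtn_eqF // /idle_var addrA.
by field; rewrite al_neq1 tie_length_neq0.
Qed.

Lemma cost_ratio_tie NS cTX phi : (0 < NS)%N ->
  cycle_reward p0 J false (cost_reward NS cTX phi al v J false) / cycle_length p0 J false =
  (NS%:R * (J%:R + 1 - p0))^-1 *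
  (cTX + phi * ((1 - v) / v) *
     (p0 * ((1 - al ^+ J) / (1 - al ^+ J * (1 - v)))
      + (1 - p0) * ((1 - al ^+ J.+1) / (1 - al ^+ J.+1 * (1 - v))))).
Proof.
move=> NS_gt0; have NS_neq0 : NS%:R != 0 :> R by rewrite pnatr_eq0 -lt0n.
rewrite /cycle_reward /cycle_length big_nat_recr //=.
rewrite (sum_coin_mean_cst _ (cost_reward_idle _ _ _ _)) big1_eq /coin_mean /cost_reward.
rewrite !transmits_J // !transmits_succJ /=.
rewrite /phase_var /= gtn_eqF // addrA.
have := idle_var_neq0 J; have := idle_var_neq0 J.+1; rewrite /idle_var => idle1_neq0 idle_neq0.
by field; rewrite NS_neq0 tie_length_neq0 idle_neq0 idle1_neq0 gt_eqF.
Qed.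

End CycleAverages.

Section MyopicPolicy.
Variables (R : realType) (al th l : R) (J : nat) (strict : bool).
Hypotheses (al_ge0 : 0 <= al) (al_lt1 : al < 1) (th_gt0 : 0 < th).
Hypotheses (l_gt0 : 0 < l) (l_lt : l < lam_th th) (J_gt0 : (0 < J)%N).
Let Vs := Num.sqrt (l * th).
Hypothesis idle_below : forall m, (0 < m < J)%N -> idle_var al Vs m < vth th l.
Hypothesis idle_atJ :
  if strict then vth th l < idle_var al Vs J else idle_var al Vs J == vth th l.
Hypothesis idle_above : vth th l < idle_var al Vs J.+1.

Let Vs_gt0 : 0 < Vs.
Proof. by rewrite sqrtr_gt0 mulr_gt0. Qed.

Let Vs_lt1 : Vs < 1.
Proof. by rewrite /Vs sqrt_lt1 // ltW. Qed.

Lemma active_phase m b : (m <= J.+1)%N ->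
  active th l (phase_var al Vs m) b = transmits J strict m b.
Proof.
move=> mJ; rewrite /active /transmits /phase_var.
have [->|m_neq0] := eqVneq m 0%N; first by rewrite vth_lt1 // ltW.
case: (ltngtP m J) => [m_lt|m_gt|->].
- have idle_lt : idle_var al Vs m < vth th l by rewrite idle_below // lt0n m_neq0.
  by rewrite ltNge (ltW idle_lt) lt_eqF // (ltn_eqF m_lt) ltnNge (ltnW m_lt).
- have -> : m = J.+1 by apply/eqP; rewrite eqn_leq mJ m_gt.
  by rewrite idle_above.
- by case: strict idle_atJ => [->|/eqP ->] /=; rewrite ?orbT ?ltxx ?eqxx ?orbF.
Qed.

Lemma Vhat_phase m b : (m <= J.+1)%N ->
  Vhat th l (phase_var al Vs m) b = mse_reward al Vs J strict m b.
Proof.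
move=> mJ; rewrite /Vhat /tk /SM /mse_reward active_phase //.
case: transmits; last by rewrite !mulr0 addr0 divr1.
have phase_gt0 : 0 < phase_var al Vs m.
  rewrite /phase_var; case: eqP => // _.
  by rewrite (lt_le_trans Vs_gt0) // idle_var_ge // ltW.
by rewrite -/Vs; field; rewrite !gt_eqF.
Qed.

Let chain_le_J w k : (chain (next_phase J strict) w k <= J.+1)%N.
Proof. exact: chain_le (@next_phase_le J strict) w k. Qed.

Lemma Vprior_chain w k :
  Vprior al th l w k = phase_var al Vs (chain (next_phase J strict) w k).
Proof.
elim: k => [//|k IHk] /=.
rewrite IHk Vhat_phase // /next_phase /mse_reward.
case tr: transmits; first by rewrite /phase_var /idle_var expr1.
have chain_neq0 : chain (next_phase J strict) w k != 0%N by apply: contraFN tr => /eqP ->.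
by rewrite /phase_var (negbTE chain_neq0) /idle_var exprS; ring.
Qed.

Lemma Mavg_cvg p0 : 0 <= p0 -> p0 <= 1 ->
  Mavg al th l p0 @ \oo -->
  cycle_reward p0 J strict (mse_reward al Vs J strict) / cycle_length p0 J strict.
Proof.
move=> p0_ge0 p0_le1.
suff -> : Mavg al th l p0 = cesaro_reward p0 (next_phase J strict) (mse_reward al Vs J strict).
  exact: cesaro_cycle_cvg.
apply: funext => T; apply: eq_expect => w; congr (_ * _).
by apply: eq_bigr => k _; rewrite Vprior_chain Vhat_phase.
Qed.

Lemma Cavg_cvg NS cTX phi p0 : 0 <= p0 -> p0 <= 1 ->
  Cavg al th cTX phi NS l p0 @ \oo -->
  cycle_reward p0 J strict (cost_reward NS cTX phi al Vs J strict) / cycle_length p0 J strict.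
Proof.
move=> p0_ge0 p0_le1.
suff -> : Cavg al th cTX phi NS l p0 =
          cesaro_reward p0 (next_phase J strict) (cost_reward NS cTX phi al Vs J strict).
  exact: cesaro_cycle_cvg.
apply: funext => T; apply: eq_expect => w; congr (_ * _).
apply: eq_bigr => k _; rewrite Vprior_chain /tk /SM active_phase // /cost_reward -/Vs.
by case: transmits; rewrite ?mulr1 ?mulr0 ?mul0r.
Qed.

End MyopicPolicy.

Section ThresholdCrossing.
Variables (R : realType) (al th lJm1 lJ l : R) (J : nat).
Hypotheses (al_ge0 : 0 <= al) (al_lt1 : al < 1) (th_gt0 : 0 < th) (J_gt0 : (0 < J)%N).
Hypotheses (lJm1_ge0 : 0 <= lJm1) (eta_lJm1 : eta al th J.-1 lJm1 = 0).
Hypotheses (eta_lJ : eta al th J lJ = 0).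
Hypotheses (lJm1_lt : lJm1 < l) (l_le : l <= lJ) (l_lt : l < lam_th th).
Let Vs := Num.sqrt (l * th).

Let l_ge0 : 0 <= l.
Proof. exact: le_trans lJm1_ge0 (ltW lJm1_lt). Qed.

Let Vs_lt1 : Vs < 1.
Proof. by rewrite /Vs sqrt_lt1. Qed.

Lemma idle_var_lt_vth m : (0 < m < J)%N -> idle_var al Vs m < vth th l.
Proof.
case/andP=> m_gt0 m_lt.
apply: le_lt_trans (le_idle_var al_ge0 al_lt1 (ltW Vs_lt1) (_ : m <= J.-1)%N) _.
  by rewrite -ltnS prednK.
rewrite -subr_lt0 -eta_idle_var -eta_lJm1.
by apply: eta_lt => //; exact: ltW.
Qed.

Lemma vth_lt_idle_var_J : l < lJ -> vth th l < idle_var al Vs J.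
Proof.
move=> l_lt_lJ; rewrite -subr_gt0 -eta_idle_var -eta_lJ.
by apply: eta_lt => //; exact: ltW.
Qed.

Lemma idle_var_J_eq_vth : l = lJ -> idle_var al Vs J == vth th l.
Proof. by move=> lE; rewrite -subr_eq0 -eta_idle_var lE eta_lJ. Qed.

Lemma vth_lt_idle_var_succJ : vth th l < idle_var al Vs J.+1.
Proof.
case: (ltgtP l lJ) l_le => [l_lt_lJ|//|l_eq] _.
  exact: lt_le_trans (vth_lt_idle_var_J l_lt_lJ)
                     (le_idle_var al_ge0 al_lt1 (ltW Vs_lt1) (leqnSn J)).
have atJ := idle_var_J_eq_vth l_eq.
(* For [al = 0] the variance would jump back to [1 > vth] right after a transmission. *)
have al_gt0 : 0 < al.
  rewrite lt_def al_ge0 andbT; apply: contraTneq atJ => ->.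
  by rewrite /idle_var expr0n gtn_eqF // mul0r subr0 eq_sym lt_eqF // vth_lt1.
by rewrite -(eqP atJ) lt_idle_var_succ.
Qed.

End ThresholdCrossing.

Theorem theorem2 (R : realType) (al cTX phi th : R) (NS B J : nat)
    (lJm1 lJ l p0 : R) :
  0 <= al -> al < 1 -> 0 < cTX -> 0 < phi -> th = phi / cTX ->
  (1 <= B)%N -> (B <= NS)%N -> (1 <= J)%N ->
  (* lJm1 = lambda*_{J-1}: the unique solution in [0, lambda_th] of eta_{J-1} = 0 *)
  0 <= lJm1 -> lJm1 <= lam_th th -> eta al th J.-1 lJm1 = 0 ->
  (forall x : R, 0 <= x -> x <= lam_th th -> eta al th J.-1 x = 0 -> x = lJm1) ->
  (* lJ = lambda*_J: the unique solution in [0, lambda_th] of eta_J = 0 *)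
  0 <= lJ -> lJ <= lam_th th -> eta al th J lJ = 0 ->
  (forall x : R, 0 <= x -> x <= lam_th th -> eta al th J x = 0 -> x = lJ) ->
  0 < l -> l < lam_th th -> lJm1 < l -> l <= lJ ->
  0 <= p0 -> p0 <= 1 ->
  let Vs := Num.sqrt (l * th) in
  (l = lJ ->
     (Mavg al th l p0 @ \oo -->
        (1 - (1 - al ^+ J * (1 - (1 - al) * (1 - p0))) * (1 - Vs)
              / ((J%:R + 1 - p0) * (1 - al)) : R))
     /\
     (Cavg al th cTX phi NS l p0 @ \oo -->
        ((NS%:R * (J%:R + 1 - p0))^-1 *
        (cTX + phi * ((1 - Vs) / Vs) *
           (p0 * ((1 - al ^+ J) / (1 - al ^+ J * (1 - Vs)))
            + (1 - p0) * ((1 - al ^+ J.+1) / (1 - al ^+ J.+1 * (1 - Vs))))) : R)))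
  /\
  (l < lJ ->
     (Mavg al th l p0 @ \oo -->
        (1 - (1 - al ^+ J) * (1 - Vs) / (J%:R * (1 - al)) : R))
     /\
     (Cavg al th cTX phi NS l p0 @ \oo -->
        ((NS%:R * J%:R)^-1 *
        (cTX + phi * Vs^-1 * ((1 - al ^+ J) * (1 - Vs) / (1 - al ^+ J * (1 - Vs)))) : R))).
Proof.
move=> al_ge0 al_lt1 cTX_gt0 phi_gt0 thE B_gt0 B_le J_gt0 lJm1_ge0 _ eta_lJm1 _
  lJ_ge0 _ eta_lJ _ l_gt0 l_lt lJm1_lt l_le p0_ge0 p0_le1 Vs.
have th_gt0 : 0 < th by rewrite thE divr_gt0.
have NS_gt0 : (0 < NS)%N := leq_trans B_gt0 B_le.
have Vs_gt0 : 0 < Vs by rewrite sqrtr_gt0 mulr_gt0.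
have Vs_le1 : Vs <= 1 := ltW (sqrt_lt1 th_gt0 (ltW l_gt0) l_lt).
have below m : (0 < m < J)%N -> idle_var al Vs m < vth th l.
  by move=> mJ; apply: (idle_var_lt_vth (lJm1 := lJm1) (J := J)).
have above : vth th l < idle_var al Vs J.+1.
  by apply: (vth_lt_idle_var_succJ (lJm1 := lJm1) (lJ := lJ)).
split=> [l_eq | l_lt_lJ].
  have atJ : idle_var al Vs J == vth th l by apply: (idle_var_J_eq_vth (lJ := lJ)).
  rewrite -mse_ratio_tie // -cost_ratio_tie //.
  by split; [apply: (Mavg_cvg (strict := false)) | apply: (Cavg_cvg (strict := false))].
have atJ : vth th l < idle_var al Vs J.
  by apply: (vth_lt_idle_var_J (lJm1 := lJm1) (lJ := lJ)).
rewrite -(mse_ratio_strict Vs p0) // -(cost_ratio_strict p0) //.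
by split; [apply: (Mavg_cvg (strict := true)) | apply: (Cavg_cvg (strict := true))].
Qed.
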